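(* Let $\mathbf{X}=(X_1,\ldots,X_d)$ be a random vector (components not necessarily independent), $Y=\eta(\mathbf{X})\in\mathcal{Y}$, and $k_{\mathcal{Y}}$ a positive definite kernel on $\mathcal{Y}$ with $\mathbb{E}_{\xi\sim\mathrm{P}_{Y\mid\mathbf{X}_A=\mathbf{x}_A}}k_{\mathcal{Y}}(\xi,\xi)<\infty$ for all $A\subseteq\{1,\ldots,d\}$ and all $\mathbf{x}_A$, and assume $\mathrm{MMD}^2_{\mathrm{tot}}>0$. Define for $A\subseteq\{1,\ldots,d\}$ $$\mathrm{val}(A)=\frac{\mathbb{E}_{\mathbf{X}_A}\big(\mathrm{MMD}^2(\mathrm{P}_Y,\mathrm{P}_{Y\mid\mathbf{X}_A})\big)}{\mathrm{MMD}^2_{\mathrm{tot}}},\qquad \mathrm{val}'(A)=\frac{\mathbb{E}_{\mathbf{X}_{-A}}\big[\mathbb{E}_{\xi\sim\mathrm{P}_{Y\mid\mathbf{X}_{-A}}}k_{\mathcal{Y}}(\xi,\xi)-\mathbb{E}_{\xi,\xi'\sim\mathrm{P}_{Y\mid\mathbf{X}_{-A}}}k_{\mathcal{Y}}(\xi,\xi')\big]}{\mathrm{MMD}^2_{\mathrm{tot}}}.$$ Then for every $l=1,\ldots,d$, the Shapley value of $l$ computed with value function $\mathrm{val}'$ equals the Shapley value of $l$ computed with value function $\mathrm{val}$ (the MMD-Shapley effect $Sh^{\mathrm{MMD}}_l$).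
   Context: For a value function $v$ on subsets of $\{1,\ldots,d\}$, the Shapley value of $l$ is $\phi_l(v)=\frac1d\sum_{A\subseteq\{1,\ldots,d\}\setminus\{l\}}\binom{d-1}{|A|}^{-1}\big(v(A\cup\{l\})-v(A)\big)$. $\mathbf{X}_A$ is the subvector with indices in $A$, $\mathbf{X}_{-A}$ that with indices in $\{1,\ldots,d\}\setminus A$; $\mathrm{P}_{Y\mid\mathbf{X}_A}$ is the conditional law of $Y$ given $\mathbf{X}_A$ (equal to $\mathrm{P}_Y$ when $A=\emptyset$), and $\xi,\xi'$ are independent draws from it. $\mathrm{MMD}^2(\mathrm{P},\mathrm{Q})=\mathbb{E}k_{\mathcal{Y}}(\xi,\xi')-2\mathbb{E}k_{\mathcal{Y}}(\xi,\zeta)+\mathbb{E}k_{\mathcal{Y}}(\zeta,\zeta')$ with $\xi,\xi'\sim\mathrm{P}$, $\zeta,\zeta'\sim\mathrm{Q}$ independent, and $\mathrm{MMD}^2_{\mathrm{tot}}=\mathbb{E}k_{\mathcal{Y}}(Y,Y)-\mathbb{E}k_{\mathcal{Y}}(Y,Y')$ with $Y'$ an independent copy of $Y$. *)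

From HB Require Import structures.
From mathcomp Require Import all_boot all_order all_algebra.
From mathcomp Require Import all_classical all_reals all_analysis measurable_realfun.
Set Implicit Arguments. Unset Strict Implicit. Unset Printing Implicit Defensive.
Import Order.TTheory GRing.Theory Num.Theory.
Local Open Scope classical_set_scope.
Local Open Scope ring_scope.

Definition shapley (R : realFieldType) (d : nat) (v : {set 'I_d} -> R) (l : 'I_d) : R :=
  d%:R^-1 * \sum_(A : {set 'I_d} | l \notin A)
              ('C(d.-1, #|A|))%:R^-1 * (v (l |: A) - v A).

Definition pos_def_kernel (R : realType) (T : Type) (k : T -> T -> R) : Prop :=
  (forall a b, k a b = k b a) /\
  forall (n : nat) (xs : 'I_n -> T) (c : 'I_n -> R),
    0 <= \sum_(i < n) \sum_(j < n) c i * c j * k (xs i) (xs j).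

Definition sigmaX {dO : measure_display} {Om : measurableType dO} {d : nat}
  {dX : 'I_d -> measure_display} {TX : forall i, measurableType (dX i)}
  (X : forall i : 'I_d, Om -> TX i) (A : {set 'I_d}) : set (set Om) :=
  <<s \bigcup_(i in [set i | i \in A]) preimage_set_system setT (X i) measurable >>.

(* kappa is a regular conditional distribution of Y given X_A (= sigma(X_A)):
   a probability kernel Omega -> TY such that omega |-> kappa omega C is
   sigma(X_A)-measurable and a version of P(Y in C | sigma(X_A)). *)
Definition is_cond_law {R : realType} {dO : measure_display} {Om : measurableType dO}
  {dY : measure_display} {TY : measurableType dY} {d : nat}
  {dX : 'I_d -> measure_display} {TX : forall i, measurableType (dX i)}
  (P : probability Om R) (X : forall i : 'I_d, Om -> TX i) (Y : Om -> TY)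
  (A : {set 'I_d}) (kappa : Om -> probability TY R) : Prop :=
  (forall C : set TY, measurable C ->
     forall B : set (\bar R), measurable B ->
       sigmaX X A ((fun w => kappa w C) @^-1` B)) /\
  (forall C : set TY, measurable C -> forall E : set Om, sigmaX X A E ->
     P (E `&` Y @^-1` C) = (\int[P]_(w in E) kappa w C)%E).

Local Open Scope ereal_scope.

Definition Ekdiag {R : realType} {dY} {TY : measurableType dY}
  (k : TY -> TY -> R) (Q : probability TY R) : \bar R :=
  \int[Q]_a (k a a)%:E.

Definition Ekpair {R : realType} {dY} {TY : measurableType dY}
  (k : TY -> TY -> R) (Q : probability TY R) : \bar R :=
  \int[Q]_a \int[Q]_b (k a b)%:E.

Definition Ekcross {R : realType} {dO} {Om : measurableType dO} {dY} {TY : measurableType dY}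
  (P : probability Om R) (Y : Om -> TY) (k : TY -> TY -> R) (Q : probability TY R) : \bar R :=
  \int[Q]_a \int[P]_w (k a (Y w))%:E.

Definition EkYY' {R : realType} {dO} {Om : measurableType dO} {dY} {TY : measurableType dY}
  (P : probability Om R) (Y : Om -> TY) (k : TY -> TY -> R) : \bar R :=
  \int[P]_w \int[P]_w' (k (Y w) (Y w'))%:E.

Definition MMD2Y {R : realType} {dO} {Om : measurableType dO} {dY} {TY : measurableType dY}
  (P : probability Om R) (Y : Om -> TY) (k : TY -> TY -> R) (Q : probability TY R) : \bar R :=
  EkYY' P Y k - 2%:E * Ekcross P Y k Q + Ekpair k Q.

Definition MMD2tot {R : realType} {dO} {Om : measurableType dO} {dY} {TY : measurableType dY}
  (P : probability Om R) (Y : Om -> TY) (k : TY -> TY -> R) : \bar R :=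
  \int[P]_w (k (Y w) (Y w))%:E - EkYY' P Y k.

(* val(A) = E_{X_A} MMD^2(P_Y, P_{Y|X_A}) / MMD^2_tot,
   where kappa A omega = P_{Y | X_A = X_A(omega)}. *)
Definition val_MMD {R : realType} {dO} {Om : measurableType dO} {dY} {TY : measurableType dY}
  {d : nat} (P : probability Om R) (Y : Om -> TY) (k : TY -> TY -> R)
  (kappa : {set 'I_d} -> Om -> probability TY R) (A : {set 'I_d}) : R :=
  (fine (\int[P]_w MMD2Y P Y k (kappa A w)) / fine (MMD2tot P Y k))%R.

Definition val'_MMD {R : realType} {dO} {Om : measurableType dO} {dY} {TY : measurableType dY}
  {d : nat} (P : probability Om R) (Y : Om -> TY) (k : TY -> TY -> R)
  (kappa : {set 'I_d} -> Om -> probability TY R) (A : {set 'I_d}) : R :=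
  (fine (\int[P]_w (Ekdiag k (kappa (~: A) w) - Ekpair k (kappa (~: A) w)))
     / fine (MMD2tot P Y k))%R.

From HB Require Import structures.
From mathcomp Require Import all_boot all_order all_algebra.
From mathcomp Require Import all_classical all_reals all_analysis measurable_realfun giry.
From mathcomp Require Import ring lra zify.
Set Implicit Arguments. Unset Strict Implicit. Unset Printing Implicit Defensive.
Import Order.TTheory GRing.Theory Num.Theory.

(** Let [B] be any set of inputs and [xi, xi'] independent draws from
    [P_{Y|X_B}].  By the law of total expectation, averaging over [X_B]
    turns [E k(xi, xi)] into [E k(Y, Y)] and [E k(xi, Y')] into
    [E k(Y, Y')], so [E_{X_B} MMD^2(P_Y, P_{Y|X_B}) = E_{X_B} E k(xi, xi')
    - E k(Y, Y')], and adding the numerator of [val'] gives [MMD^2_tot].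
    Hence [val'(A) = 1 - val(-A)]: [val'] is the dual game of [val], and the
    Shapley value of a dual game is the original one (reindex the coalitions
    [A] by [-(A + l)] and use the symmetry of binomial coefficients).
    Positive definiteness gives [|k(a,b)| <= k(a,a) + k(b,b)], which makes
    every integral above finite as soon as [E k(Y, Y)] is; when it is not,
    [MMD^2_tot] has no finite value and both games are [0]. *)

Local Open Scope ring_scope.

Lemma shapley_dual (R : realFieldType) d (c : R) (v : {set 'I_d} -> R) l :
  shapley (fun A => c - v (~: A)) l = shapley v l.
Proof.
rewrite /shapley; congr (_ * _).
pose flip (A : {set 'I_d}) := [set x | (x == l) == (x \in A)].
have flipK : involutive flip.
  by move=> A; apply/setP => x; rewrite !inE; case: (x == l); case: (x \in A).
rewrite (reindex_inj (inv_inj flipK)) /=.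
have flip_l A : (l \in flip A) = (l \in A).
  by rewrite inE eqxx; case: (l \in A).
apply: eq_big => [A|A]; rewrite flip_l // => lA.
have flipE : flip A = ~: A :\ l.
  apply/setP => x; rewrite !inE.
  by case: (x =P l) => [->|_]; [rewrite (negbTE lA) | case: (x \in A)].
have -> : ~: (l |: flip A) = A.
  apply/setP => x; rewrite flipE !inE.
  by case: (x =P l) => [->|_]; rewrite /= ?negbK ?(negbTE lA).
have -> : ~: flip A = l |: A.
  apply/setP => x; rewrite flipE !inE.
  by case: (x =P l) => [->|_]; rewrite /= ?negbK.
have card_split : (#|A| + (1 + #|flip A|))%N = d.
  by have := cardsC A; rewrite card_ord (cardsD1 l (~: A)) inE lA -flipE.
have -> : #|flip A| = (d.-1 - #|A|)%N by lia.
rewrite bin_sub; last by lia.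
by congr (_ * _); ring.
Qed.

Section PosDefKernel.
Variables (R : realType) (T : Type) (k : T -> T -> R).
Hypothesis hk : pos_def_kernel k.

Lemma pos_def_kernel_diag_ge0 a : 0 <= k a a.
Proof.
by have := hk.2 1%N (fun _ => a) (fun _ => 1); rewrite !big_ord1 !mul1r.
Qed.

Lemma pos_def_kernel_norm_le a b : `|k a b| <= k a a + k b b.
Proof.
pose xs (i : 'I_2) := if val i == 0%N then a else b.
have := hk.2 2%N xs (fun i => if val i == 0%N then 1 else -1).
have := hk.2 2%N xs (fun _ => 1).
rewrite !big_ord_recr !big_ord0 /= /xs /= (hk.1 b a) => hplus hminus.
by rewrite ler_norml; apply/andP; split; lra.
Qed.

End PosDefKernel.

Local Open Scope classical_set_scope.
Local Open Scope ereal_scope.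

Lemma measurable_giry_integral (R : realType) d1 d2
    (T1 : measurableType d1) (T2 : measurableType d2)
    (psi : T1 -> giry T2 R) (h : T2 -> \bar R) :
  measurable_fun setT psi -> measurable_fun setT h ->
  measurable_fun setT (fun w => \int[psi w]_x h x).
Proof.
move=> mpsi mh.
apply: (eq_measurable_fun
  (fun w => \int[psi w]_x h^\+ x - \int[psi w]_x h^\- x)).
  by move=> w _; rewrite [RHS]integralE.
apply: emeasurable_funB.
- apply: (measurableT_comp (f := giry_int ^~ h^\+) _ mpsi).
  exact: measurable_giry_int (measurable_funepos mh) (@funepos_ge0 _ _ h).
- apply: (measurableT_comp (f := giry_int ^~ h^\-) _ mpsi).
  exact: measurable_giry_int (measurable_funeneg mh) (@funeneg_ge0 _ _ h).
Qed.

Lemma measurable_fun_partial_integral (R : realType) d1 d2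
    (T1 : measurableType d1) (T2 : measurableType d2)
    (m : {sigma_finite_measure set T2 -> \bar R}) (f : T1 * T2 -> \bar R) :
  measurable_fun setT f -> measurable_fun setT (fun x => \int[m]_y f (x, y)).
Proof.
move=> mf.
apply: (eq_measurable_fun
  (fun x => \int[m]_y f^\+ (x, y) - \int[m]_y f^\- (x, y))).
  by move=> x _; rewrite [RHS]integralE; congr (_ - _);
    apply: eq_integral => y _; rewrite !(funeposE, funenegE).
apply: emeasurable_funB; apply: measurable_fun_fubini_tonelli_F.
- exact: measurable_funepos.
- exact: funepos_ge0.
- exact: measurable_funeneg.
- exact: funeneg_ge0.
Qed.

Lemma probability_ge0_integralD_cst (R : realType) d (T : measurableType d)
    (mu : probability T R) (u : T -> \bar R) (c : \bar R) :
  measurable_fun setT u -> (forall x, 0 <= u x) -> 0 <= c ->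
  \int[mu]_x (u x + c) = \int[mu]_x u x + c.
Proof.
move=> mu0 u0 c0.
rewrite ge0_integralD // integral_cst //; congr (_ + _).
by rewrite -[RHS]mule1; congr (_ * _); exact: probability_setT.
Qed.

Section Disintegration.
Variables (R : realType) (dO dY : measure_display).
Variables (Om : measurableType dO) (TY : measurableType dY).
Variables (P : probability Om R) (Y : Om -> TY) (kap : Om -> probability TY R).
Hypothesis hY : measurable_fun setT Y.
Hypothesis mkap : measurable_fun setT (fun w => kap w : giry TY R).
Hypothesis kapY : forall C, measurable C -> P (Y @^-1` C) = \int[P]_w kap w C.

Lemma ge0_integral_disintegration h :
  measurable_fun setT h -> (forall x, 0 <= h x) ->
  \int[P]_w \int[kap w]_a h a = \int[P]_w h (Y w).
Proof.
move=> mh h0.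
have := giry_int_bind (P : giry Om R) mkap mh h0; rewrite /giry_int => <-.
rewrite (eq_measure_integral (giry_map hY (P : giry Om R))); last first.
  move=> C mC _ /=; rewrite giry_int_map //; last exact: measurable_giry_ev.
  by rewrite /giry_int /giry_ev /= -kapY.
by have := giry_int_map hY (P : giry Om R) mh h0; rewrite /giry_int.
Qed.

Lemma integrable_disintegration h :
  measurable_fun setT h -> P.-integrable setT (h \o Y) ->
  P.-integrable setT (fun w => \int[kap w]_a h a).
Proof.
move=> mh /integrableP[_ hYfin].
have mabsh : measurable_fun setT (abse \o h) by exact: measurableT_comp.
apply/integrableP; split; first exact: measurable_giry_integral.
apply: le_lt_trans hYfin.
rewrite -(ge0_integral_disintegration mabsh) //; last by move=> a; exact: abse_ge0.
apply: ge0_le_integral => //.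
- by apply: measurableT_comp => //; exact: measurable_giry_integral.
- exact: measurable_giry_integral.
- by move=> w _; exact: le_abse_integral.
Qed.

Lemma integral_disintegration h :
  measurable_fun setT h -> P.-integrable setT (h \o Y) ->
  \int[P]_w \int[kap w]_a h a = \int[P]_w h (Y w).
Proof.
move=> mh ihY.
have mhp := measurable_funepos mh; have mhn := measurable_funeneg mh.
have ip : P.-integrable setT (fun w => \int[kap w]_a h^\+ a).
  by apply: integrable_disintegration; rewrite // -funepos_comp integrable_funepos.
have in_ : P.-integrable setT (fun w => \int[kap w]_a h^\- a).
  by apply: integrable_disintegration; rewrite // -funeneg_comp integrable_funeneg.
rewrite (eq_integral (fun w => \int[kap w]_a h^\+ a - \int[kap w]_a h^\- a));
  last by move=> w _; rewrite integralE.
have hp0 : forall a, 0 <= h^\+ a by exact: funepos_ge0.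
have hn0 : forall a, 0 <= h^\- a by exact: funeneg_ge0.
rewrite integralB // !ge0_integral_disintegration // [RHS]integralE.
by congr (_ - _); apply: eq_integral => w _; rewrite !(funeposE, funenegE).
Qed.

End Disintegration.

Section KernelIntegrals.
Variables (R : realType) (dY : measure_display) (TY : measurableType dY).
Variable k : TY -> TY -> R.
Hypothesis hk : pos_def_kernel k.
Hypothesis hkm : measurable_fun setT (fun p : TY * TY => k p.1 p.2).

Lemma measurable_kernel_comp dS (S : measurableType dS) (f1 f2 : S -> TY) :
  measurable_fun setT f1 -> measurable_fun setT f2 ->
  measurable_fun setT (fun s => (k (f1 s) (f2 s))%:E).
Proof.
move=> m1 m2; apply/measurable_EFinP.
exact: measurableT_comp hkm (measurable_fun_pair m1 m2).
Qed.

Lemma measurable_kernel_diag : measurable_fun setT (fun a => (k a a)%:E).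
Proof. exact: measurable_kernel_comp. Qed.

Lemma measurable_kernel_uncurry :
  measurable_fun setT (fun p : TY * TY => (k p.1 p.2)%:E).
Proof. exact: measurable_kernel_comp. Qed.

Lemma measurable_abse_kernel_uncurry :
  measurable_fun setT (fun p : TY * TY => `|(k p.1 p.2)%:E|).
Proof. exact: measurableT_comp measurable_kernel_uncurry. Qed.

Lemma kernel_diag_ge0 a : 0 <= (k a a)%:E.
Proof. by rewrite lee_fin; exact: pos_def_kernel_diag_ge0. Qed.

Lemma Ekdiag_ge0 (mu : probability TY R) : 0 <= Ekdiag k mu.
Proof. by apply: integral_ge0 => a _; exact: kernel_diag_ge0. Qed.

Lemma integral_abse_kernel_le dS (S : measurableType dS) (nu : probability S R)
    (y : S -> TY) a :
  measurable_fun setT y ->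
  \int[nu]_s `|(k a (y s))%:E| <= (k a a)%:E + \int[nu]_s (k (y s) (y s))%:E.
Proof.
move=> my; have mkyy := measurable_kernel_comp my my.
have kyy0 s : 0 <= (k (y s) (y s))%:E by exact: kernel_diag_ge0.
rewrite addeC -probability_ge0_integralD_cst //; last exact: kernel_diag_ge0.
apply: ge0_le_integral => //.
- by apply: measurableT_comp => //; exact: measurable_kernel_comp.
- exact: emeasurable_funD.
- by move=> s _; rewrite -EFinD lee_fin addrC; exact: pos_def_kernel_norm_le.
Qed.

Lemma integral_abse_kernel_pair_le (mu : probability TY R) :
  \int[mu]_a \int[mu]_b `|(k a b)%:E| <= Ekdiag k mu + Ekdiag k mu.
Proof.
rewrite -(probability_ge0_integralD_cst _ measurable_kernel_diag kernel_diag_ge0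
  (Ekdiag_ge0 mu)).
apply: ge0_le_integral => //.
- by move=> a _; exact: integral_ge0.
- apply: (measurable_fun_fubini_tonelli_F (m2 := mu) _
    measurable_abse_kernel_uncurry) => p.
  exact: abse_ge0.
- by apply: emeasurable_funD => //; exact: measurable_kernel_diag.
- by move=> a _; exact: integral_abse_kernel_le.
Qed.

Lemma abse_Ekpair_le (mu : probability TY R) :
  `|Ekpair k mu| <= Ekdiag k mu + Ekdiag k mu.
Proof.
apply: le_trans (integral_abse_kernel_pair_le mu).
have minner : measurable_fun setT (fun a => \int[mu]_b (k a b)%:E).
  exact: measurable_fun_partial_integral measurable_kernel_uncurry.
apply: le_trans (le_abse_integral _ measurableT minner) _.
apply: ge0_le_integral => //.
- exact: measurableT_comp.
- apply: (measurable_fun_fubini_tonelli_F (m2 := mu) _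
    measurable_abse_kernel_uncurry) => p.
  exact: abse_ge0.
- by move=> a _; apply: le_abse_integral => //; exact: measurable_kernel_comp.
Qed.

Lemma Ekpair_giry_prod (mu : probability TY R) : Ekdiag k mu < +oo ->
  Ekpair k mu =
    \int[giry_prod ((mu : giry TY R), (mu : giry TY R))]_p (k p.1 p.2)%:E.
Proof.
move=> mu_fin.
have ik : ((mu : {sigma_finite_measure set TY -> \bar R}) \x mu).-integrable
    setT (fun p : TY * TY => (k p.1 p.2)%:E).
  apply/integrable12ltyP; first exact: measurable_kernel_uncurry.
  apply: le_lt_trans (integral_abse_kernel_pair_le mu) _.
  exact: lte_add_pinfty.
by rewrite /Ekpair -(integral12_prod_meas1 ik).
Qed.

Section PushforwardKernelMean.
Variables (dO : measure_display) (Om : measurableType dO).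
Variables (P : probability Om R) (Y : Om -> TY).
Hypothesis hY : measurable_fun setT Y.

Definition kernel_mean a : \bar R := \int[P]_w (k a (Y w))%:E.

Definition EkYY : \bar R := \int[P]_w (k (Y w) (Y w))%:E.

Lemma EkYY_ge0 : 0 <= EkYY.
Proof. by apply: integral_ge0 => w _; exact: kernel_diag_ge0. Qed.

Lemma measurable_kernel_mean : measurable_fun setT kernel_mean.
Proof.
apply: (measurable_fun_partial_integral P (f := fun p => (k p.1 (Y p.2))%:E)).
exact: measurable_kernel_comp (measurableT_comp hY measurable_snd).
Qed.

Lemma abse_kernel_mean_le a : `|kernel_mean a| <= (k a a)%:E + EkYY.
Proof.
apply: le_trans (integral_abse_kernel_le P a hY).
by apply: le_abse_integral => //; exact: measurable_kernel_comp.
Qed.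

Lemma abse_Ekcross_le (mu : probability TY R) :
  `|Ekcross P Y k mu| <= Ekdiag k mu + EkYY.
Proof.
rewrite /Ekcross -(probability_ge0_integralD_cst _ measurable_kernel_diag
  kernel_diag_ge0 EkYY_ge0).
apply: le_trans (le_abse_integral _ measurableT measurable_kernel_mean) _.
apply: ge0_le_integral => //.
- exact: measurableT_comp measurable_kernel_mean.
- by apply: emeasurable_funD => //; exact: measurable_kernel_diag.
- by move=> a _; exact: abse_kernel_mean_le.
Qed.

End PushforwardKernelMean.

Section ConditionalKernelMoments.
Variables (dO : measure_display) (Om : measurableType dO).
Variables (P : probability Om R) (Y : Om -> TY) (kap : Om -> probability TY R).
Hypothesis hY : measurable_fun setT Y.
Hypothesis mkap : measurable_fun setT (fun w => kap w : giry TY R).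
Hypothesis kapY : forall C, measurable C -> P (Y @^-1` C) = \int[P]_w kap w C.
Hypothesis kap_fin : forall w, Ekdiag k (kap w) < +oo.
Hypothesis EkYY_fin : EkYY P Y < +oo.

Lemma measurable_Ekdiag_cond : measurable_fun setT (fun w => Ekdiag k (kap w)).
Proof. exact: (measurable_giry_integral mkap measurable_kernel_diag). Qed.

Lemma measurable_Ekcross_cond :
  measurable_fun setT (fun w => Ekcross P Y k (kap w)).
Proof. exact: (measurable_giry_integral mkap (measurable_kernel_mean P hY)). Qed.

Lemma measurable_Ekpair_cond : measurable_fun setT (fun w => Ekpair k (kap w)).
Proof.
apply: (eq_measurable_fun (fun w => \int[giry_prod ((kap w : giry TY R),
    (kap w : giry TY R))]_p (k p.1 p.2)%:E)).
  by move=> w _; rewrite (Ekpair_giry_prod (kap_fin w)).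
apply: measurable_giry_integral measurable_kernel_uncurry.
exact: measurableT_comp measurable_giry_prod (measurable_fun_pair mkap mkap).
Qed.

Lemma integral_Ekdiag_cond : \int[P]_w Ekdiag k (kap w) = EkYY P Y.
Proof.
exact (ge0_integral_disintegration hY mkap kapY measurable_kernel_diag
  kernel_diag_ge0).
Qed.

Lemma integrable_Ekdiag_cond : P.-integrable setT (fun w => Ekdiag k (kap w)).
Proof.
apply/integrableP; split; first exact: measurable_Ekdiag_cond.
rewrite (eq_integral (fun w => Ekdiag k (kap w))); last first.
  by move=> w _; rewrite gee0_abs // Ekdiag_ge0.
by rewrite integral_Ekdiag_cond.
Qed.

Lemma integrable_Ekpair_cond : P.-integrable setT (fun w => Ekpair k (kap w)).
Proof.
have le_diag w :
    `|Ekpair k (kap w)| <= `|Ekdiag k (kap w) + Ekdiag k (kap w)|.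
  rewrite [X in _ <= X]gee0_abs; first exact: abse_Ekpair_le.
  by rewrite adde_ge0 ?Ekdiag_ge0.
apply: (le_integrable measurableT measurable_Ekpair_cond _
  (integrableD measurableT integrable_Ekdiag_cond integrable_Ekdiag_cond)).
by move=> w _; exact: le_diag.
Qed.

Lemma EkYY_fin_num : EkYY P Y \is a fin_num.
Proof. by rewrite ge0_fin_numE // EkYY_ge0. Qed.

Lemma integrable_Ekcross_cond :
  P.-integrable setT (fun w => Ekcross P Y k (kap w)).
Proof.
have iEkYY := finite_measure_integrable_cst P (fine (EkYY P Y)) measurableT.
have le_diag w :
    `|Ekcross P Y k (kap w)| <= `|Ekdiag k (kap w) + (fine (EkYY P Y))%:E|.
  rewrite fineK ?EkYY_fin_num // [X in _ <= X]gee0_abs.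
    exact: abse_Ekcross_le.
  by rewrite adde_ge0 ?Ekdiag_ge0 ?EkYY_ge0.
apply: (le_integrable measurableT measurable_Ekcross_cond _
  (integrableD measurableT integrable_Ekdiag_cond iEkYY)).
by move=> w _; exact: le_diag.
Qed.

Lemma integrable_kernel_mean_comp : P.-integrable setT (kernel_mean P Y \o Y).
Proof.
have mkyy := measurable_kernel_comp hY hY.
apply/integrableP; split.
  exact: measurableT_comp (measurable_kernel_mean P hY) hY.
apply: (@le_lt_trans _ _ (\int[P]_w ((k (Y w) (Y w))%:E + EkYY P Y))).
  apply: ge0_le_integral => //.
  - exact: measurableT_comp (measurableT_comp (measurable_kernel_mean P hY) hY).
  - exact: emeasurable_funD.
  - by move=> w _; exact: abse_kernel_mean_le.
rewrite probability_ge0_integralD_cst ?EkYY_ge0 //; first exact: lte_add_pinfty.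
by move=> w; exact: kernel_diag_ge0.
Qed.

Lemma integral_Ekcross_cond : \int[P]_w Ekcross P Y k (kap w) = EkYY' P Y k.
Proof.
exact (integral_disintegration hY mkap kapY (measurable_kernel_mean P hY)
  integrable_kernel_mean_comp).
Qed.

Lemma integral_kernel_variance_add_MMD2Y :
  (fine (\int[P]_w (Ekdiag k (kap w) - Ekpair k (kap w)))
   + fine (\int[P]_w MMD2Y P Y k (kap w)) = fine (MMD2tot P Y k))%R.
Proof.
have iD := integrable_Ekdiag_cond; have iPp := integrable_Ekpair_cond.
have iC := integrable_Ekcross_cond.
have fEkYY' : EkYY' P Y k \is a fin_num.
  by rewrite -integral_Ekcross_cond; exact: integrable_fin_num.
have fPp : \int[P]_w Ekpair k (kap w) \is a fin_num by exact: integrable_fin_num.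
have icst : P.-integrable setT (fun=> EkYY' P Y k).
  rewrite -(fineK fEkYY'); exact: finite_measure_integrable_cst.
have i2C : P.-integrable setT (fun w => 2%:E * Ekcross P Y k (kap w)).
  exact: integrableZl.
have iC2C : P.-integrable setT
    (fun w => EkYY' P Y k - 2%:E * Ekcross P Y k (kap w)).
  exact: (integrableB measurableT icst i2C).
rewrite (integralB measurableT iD iPp) integral_Ekdiag_cond /MMD2Y.
rewrite (integralD measurableT iC2C iPp) (integralB measurableT icst i2C).
rewrite (integralZl measurableT iC) integral_Ekcross_cond integral_cst //.
rewrite [X in EkYY' P Y k * X](_ : _ = 1) ?mule1; last exact: probability_setT.
rewrite /MMD2tot -/(EkYY P Y).
rewrite -(fineK EkYY_fin_num) -(fineK fPp) -(fineK fEkYY') -EFinM.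
by rewrite -!EFinB -!EFinD /=; lra.
Qed.

End ConditionalKernelMoments.
End KernelIntegrals.

Section ConditionalLaw.
Variables (R : realType) (dO dY : measure_display).
Variables (Om : measurableType dO) (TY : measurableType dY).
Variables (P : probability Om R) (d : nat) (dX : 'I_d -> measure_display).
Variable TX : forall i, measurableType (dX i).
Variables (X : forall i : 'I_d, Om -> TX i) (Y : Om -> TY).
Variables (A : {set 'I_d}) (kap : Om -> probability TY R).
Hypothesis hX : forall i, measurable_fun setT (X i).
Hypothesis hkap : is_cond_law P X Y A kap.

Lemma sigmaX_measurable E : sigmaX X A E -> measurable E.
Proof.
apply: smallest_sub; first exact: sigma_algebra_measurable.
by move=> _ [i _ [B mB <-]]; exact: hX.
Qed.

Lemma cond_law_measurable : measurable_fun setT (fun w => kap w : giry TY R).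
Proof.
apply: measurable_giry_codensity => // C mC _ B mB; rewrite setTI.
exact: sigmaX_measurable (hkap.1 C mC B mB).
Qed.

Lemma cond_law_total C : measurable C -> P (Y @^-1` C) = \int[P]_w kap w C.
Proof.
move=> mC; have sigmaXT : sigmaX X A setT.
  by rewrite -setC0; apply: sigma_algebraC; exact: sigma_algebra0.
by have := hkap.2 C mC setT sigmaXT; rewrite setTI.
Qed.

End ConditionalLaw.

Lemma val'_MMD_dual (R : realType) (dO : measure_display) (Om : measurableType dO)
    (P : probability Om R) (d : nat)
    (dX : 'I_d -> measure_display) (TX : forall i, measurableType (dX i))
    (X : forall i : 'I_d, Om -> TX i)
    (dY : measure_display) (TY : measurableType dY) (Y : Om -> TY)
    (k : TY -> TY -> R) (kappa : {set 'I_d} -> Om -> probability TY R) :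
  (forall i, measurable_fun setT (X i)) -> measurable_fun setT Y ->
  pos_def_kernel k -> measurable_fun setT (fun p : TY * TY => k p.1 p.2) ->
  (forall A, is_cond_law P X Y A (kappa A)) ->
  (forall A w, Ekdiag k (kappa A w) < +oo) ->
  fine (MMD2tot P Y k) != 0%R ->
  val'_MMD P Y k kappa = fun A => (1 - val_MMD P Y k kappa (~: A))%R.
Proof.
move=> hX hY hk hkm hkappa hfin tot_neq0.
have EkYY_fin : EkYY k P Y < +oo.
  have : MMD2tot P Y k \is a fin_num.
    by move: tot_neq0; case: (MMD2tot P Y k) => [r||] //=; rewrite eqxx.
  rewrite /MMD2tot fin_numB => /andP[+ _]; rewrite ge0_fin_numE //.
  exact: EkYY_ge0.
apply/funext => A; rewrite /val'_MMD /val_MMD.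
have decomp := integral_kernel_variance_add_MMD2Y hk hkm hY
  (cond_law_measurable hX (hkappa (~: A))) (cond_law_total (hkappa (~: A)))
  (hfin (~: A)) EkYY_fin.
by rewrite -decomp in tot_neq0 *; field.
Qed.

Local Close Scope ereal_scope.

Theorem mainTheorem9 (R : realType) (dO : measure_display) (Om : measurableType dO)
  (P : probability Om R) (d : nat)
  (dX : 'I_d -> measure_display) (TX : forall i, measurableType (dX i))
  (X : forall i : 'I_d, Om -> TX i)
  (hX : forall i, measurable_fun setT (X i))
  (dY : measure_display) (TY : measurableType dY)
  (eta : (forall i : 'I_d, TX i) -> TY) (Y : Om -> TY)
  (hYeta : forall w, Y w = eta (fun i => X i w))
  (hY : measurable_fun setT Y)
  (k : TY -> TY -> R)
  (hk : pos_def_kernel k)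
  (hkm : measurable_fun setT (fun p : TY * TY => k p.1 p.2))
  (kappa : {set 'I_d} -> Om -> probability TY R)
  (hkappa : forall A, is_cond_law P X Y A (kappa A))
  (hfin : forall A w, (Ekdiag k (kappa A w) < +oo)%E)
  (htot : (0 < MMD2tot P Y k)%E) :
  forall l : 'I_d,
    shapley (val'_MMD P Y k kappa) l = shapley (val_MMD P Y k kappa) l.
Proof.
move=> l.
have [tot0|tot_neq0] := eqVneq (fine (MMD2tot P Y k)) 0.
  have -> : val'_MMD P Y k kappa = fun=> 0.
    by apply/funext => A; rewrite /val'_MMD tot0 invr0 mulr0.
  have -> : val_MMD P Y k kappa = fun=> 0.
    by apply/funext => A; rewrite /val_MMD tot0 invr0 mulr0.
  by [].
by rewrite (val'_MMD_dual hX hY hk hkm hkappa hfin tot_neq0) shapley_dual.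
Qed.
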